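(* Let $\alpha=(\alpha_1,\dots,\alpha_n)\in\mathbb{R}^n$ with $\alpha_1,\dots,\alpha_n,1$ linearly independent over $\mathbb{Q}$, $\ell=n+1$, fix $m\in\mathbb{Z}^+$, and let $\beta_\ell$ be the last entry of $A_m(\alpha_1,\dots,\alpha_n,1)^\top$. Define the norm $G_m$ on $\mathbb{R}^\ell$ by $$G_m(x_1,\dots,x_\ell)=\max\Big(|x_1|,\dots,|x_\ell|,\tfrac{m}{|\beta_\ell|}\,|\alpha_1x_1+\cdots+\alpha_nx_n+x_\ell|\Big).$$ Let $\mu_1\le\cdots\le\mu_\ell$ be the successive minima of the lattice $\mathbb{Z}^\ell$ with respect to $G_m$. Then $\mu_\ell\ge m$.
   Context: For $r=(r_1,\dots,r_\ell)\in\mathbb{Z}^\ell$, $\xi(r)=r_1\alpha_1+\cdots+r_n\alpha_n+r_\ell$; $\|\cdot\|_\infty$ is the maximum absolute value of entries. $A_m$ (Minkowski's algorithm) is the nonsingular integral $\ell\times\ell$ matrix with rows $w_1,\dots,w_\ell$ chosen successively: $w_i$ is the vector $w\in\mathbb{Z}^\ell$ with $\|w\|_\infty\le m$, linearly independent of $w_1,\dots,w_{i-1}$, minimizing $|\xi(w)|$, normalized so that its first nonzero entry is positive; $\beta_i=\xi(w_i)$. For a norm $F$ on $\mathbb{R}^\ell$ and a full lattice $\Lambda$, the $j$-th successive minimum $\mu_j$ is the infimum of $\mu>0$ such that there are $j$ linearly independent $v\in\Lambda$ with $F(v)\le\mu$. *)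

From HB Require Import structures.
From mathcomp Require Import all_boot all_order all_algebra.
Set Implicit Arguments. Unset Strict Implicit. Unset Printing Implicit Defensive.
Import Order.TTheory GRing.Theory Num.Theory.
Local Open Scope ring_scope.

Section Defs.
Variable R : realFieldType.
Variable n : nat.
(* l = n + 1 = n.+1 ; indices 'I_n.+1, the last one (ord_max) is the index l *)

(* the vector (alpha_1, ..., alpha_n, 1) *)
Definition aext (alpha : 'I_n -> R) (i : 'I_n.+1) : R :=
  match unlift ord_max i with Some j => alpha j | None => 1 end.

Definition xiR (alpha : 'I_n -> R) (x : 'rV[R]_n.+1) : R :=
  \sum_i x 0 i * aext alpha i.

Definition intmx (p q : nat) (A : 'M[int]_(p, q)) : 'M[R]_(p, q) :=
  map_mx (fun z : int => z%:~R) A.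

Definition xi (alpha : 'I_n -> R) (r : 'rV[int]_n.+1) : R := xiR alpha (intmx r).

Definition Qlin_indep (alpha : 'I_n -> R) : Prop :=
  forall c : 'I_n.+1 -> rat,
    \sum_i ratr (c i) * aext alpha i = 0 -> forall i, c i = 0.

(* the matrix whose rows are the rows k < i of W (other rows zero):
   its row space is the span of w_1, ..., w_{i-1} *)
Definition prevmx (W : 'M[rat]_n.+1) (i : 'I_n.+1) : 'M[rat]_n.+1 :=
  \matrix_(k, j) (if (k < i)%N then W k j else 0).

Definition ratmx (p q : nat) (A : 'M[int]_(p, q)) : 'M[rat]_(p, q) :=
  map_mx (fun z : int => z%:~R) A.

(* W = A_m(alpha_1, ..., alpha_n, 1): row i is the vector w_{i+1} chosen by
   Minkowski's algorithm *)
Definition is_Minkowski_matrix (m : nat) (alpha : 'I_n -> R)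
    (W : 'M[int]_n.+1) : Prop :=
  forall i : 'I_n.+1,
    [/\
        (forall j, `|W i j| <= m%:Z),
        ~~ (row i (ratmx W) <= prevmx (ratmx W) i)%MS,
        (forall w : 'rV[int]_n.+1,
            (forall j, `|w 0 j| <= m%:Z) ->
            ~~ (ratmx w <= prevmx (ratmx W) i)%MS ->
            `|xi alpha (row i W)| <= `|xi alpha w|) &
        (forall j, W i j != 0 -> (forall k : 'I_n.+1, (k < j)%N -> W i k = 0) ->
            0 < W i j)].

(* beta_l = last entry of A_m (alpha,1)^T = xi(w_l) *)
Definition beta_last (alpha : 'I_n -> R) (W : 'M[int]_n.+1) : R :=
  xi alpha (row ord_max W).

Definition Gm (m : nat) (alpha : 'I_n -> R) (W : 'M[int]_n.+1)
    (x : 'rV[R]_n.+1) : R :=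
  Num.max (\big[Num.max/0]_i `|x 0 i|)
          (m%:R / `|beta_last alpha W| * `|xiR alpha x|).

Definition succ_min_set (F : 'rV[R]_n.+1 -> R) (j : nat) (mu : R) : Prop :=
  0 < mu /\ exists V : 'M[int]_(j, n.+1),
    row_free (intmx V) /\ forall k, F (row k (intmx V)) <= mu.

Definition is_inf (S : R -> Prop) (x : R) : Prop :=
  (forall s, S s -> x <= s) /\ (forall y, (forall s, S s -> y <= s) -> y <= x).

Definition is_succ_min (F : 'rV[R]_n.+1 -> R) (j : nat) (mu : R) : Prop :=
  is_inf (succ_min_set F j) mu.

End Defs.

From HB Require Import structures.
From mathcomp Require Import all_boot all_order all_algebra.
Import Order.TTheory GRing.Theory Num.Theory.
Local Open Scope ring_scope.

(* Let v_1, ..., v_l be linearly independent integer vectors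
   with G_m(v_k) <= s for all k; we show s >= m, so that m is a lower bound
   of the set whose infimum is mu_l.
   - The first l-1 rows w_1, ..., w_{l-1} of A_m span a space of dimension
     < l, so some v_k lies outside it (row_outside_nonfull_space).
   - Such a v_k is a competitor in the last step of Minkowski's algorithm:
     if ||v_k||_oo <= m then |beta_l| <= |xi(v_k)|, hence
     m/|beta_l| * |xi(v_k)| >= m; otherwise ||v_k||_oo > m.  Either way
     G_m(v_k) >= m (Gm_ge_m_outside_prev).  This uses beta_l <> 0, which
     follows from w_l <> 0 and the Q-linear independence of alpha, 1. *)

Lemma row_outside_nonfull_space {F : fieldType} {p q r : nat}
    {V : 'M[F]_(p, q)} {U : 'M[F]_(r, q)} :
  row_full V -> ~~ row_full U -> exists k, ~~ (row k V <= U)%MS.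
Proof.
move=> fullV nonfullU.
suff /existsP[k outside] : [exists k, ~~ (row k V <= U)%MS] by exists k.
rewrite -negb_forall; apply: contra nonfullU => /forallP allin.
rewrite -sub1mx (submx_trans (_ : 1%:M <= V)%MS) ?sub1mx //.
exact/row_subP.
Qed.

(* The span of w_1, ..., w_{l-1} is a proper subspace of Q^l: the last row
   of prevmx W ord_max is zero. *)
Lemma prevmx_last_not_full {n : nat} (W : 'M[rat]_n.+1) :
  ~~ row_full (prevmx W ord_max).
Proof.
apply/negP => full.
have free : row_free (prevmx W ord_max) by rewrite row_free_unit -row_full_unit.
have : row ord_max (prevmx W ord_max) = 0.
  by apply/rowP => j; rewrite !mxE /= ltnn.
rewrite rowE => /eqP; rewrite (mulmx_free_eq0 _ free).
by move=> /eqP /matrixP /(_ 0 ord_max); rewrite !mxE !eqxx => /eqP; rewrite oner_eq0.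
Qed.

Lemma intmx_ratr (R : realFieldType) (p q : nat) (A : 'M[int]_(p, q)) :
  intmx R A = map_mx (@ratr R) (ratmx A).
Proof. by apply/matrixP => i j; rewrite !mxE ratr_int. Qed.

Section MinkowskiLastStep.
Variables (R : realFieldType) (n : nat) (alpha : 'I_n -> R).
Hypothesis halpha : Qlin_indep alpha.

Lemma xi_neq0 (w : 'rV[int]_n.+1) : w != 0 -> xi alpha w != 0.
Proof.
apply: contraNneq => xi0; apply/eqP/rowP => j; rewrite mxE.
apply/eqP; rewrite -(intr_eq0 rat); apply/eqP/(halpha (fun i => (w 0 i)%:~R)).
by rewrite -[RHS]xi0; apply: eq_bigr => i _; rewrite !mxE ratr_int.
Qed.

Variables (m : nat) (W : 'M[int]_n.+1).
Hypothesis hm : (0 < m)%N.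
Hypothesis hW : is_Minkowski_matrix m alpha W.

(* beta_l = xi(w_l) is nonzero, since w_l is independent of the previous
   rows, hence nonzero. *)
Lemma beta_last_neq0 : beta_last alpha W != 0.
Proof.
apply: xi_neq0; have [_ indep _ _] := hW ord_max.
apply: contraNneq indep => w0.
suff -> : row ord_max (ratmx W) = 0 by rewrite sub0mx.
by apply/rowP => j; move/rowP/(_ j): w0; rewrite !mxE => ->.
Qed.

Lemma Gm_ge_coord (x : 'rV[R]_n.+1) (j : 'I_n.+1) : `|x 0 j| <= Gm m alpha W x.
Proof.
by rewrite le_max (le_bigmax 0 (fun i => `|x 0 i|) j).
Qed.

Lemma Gm_ge_xi (x : 'rV[R]_n.+1) :
  m%:R / `|beta_last alpha W| * `|xiR alpha x| <= Gm m alpha W x.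
Proof. by rewrite le_max lexx orbT. Qed.

Lemma Gm_ge_m_outside_prev (v : 'rV[int]_n.+1) :
  ~~ (ratmx v <= prevmx (ratmx W) ord_max)%MS -> m%:R <= Gm m alpha W (intmx R v).
Proof.
move=> outside; rewrite leNgt; apply/negP => small.
have [_ _ minimal _] := hW ord_max.
have bounded j : `|v 0 j| <= m%:Z.
  rewrite -(ler_int R) intr_norm; apply: le_trans (ltW small).
  by have := Gm_ge_coord (intmx R v) j; rewrite mxE.
have beta_le : `|beta_last alpha W| <= `|xi alpha v| := minimal v bounded outside.
have beta_gt0 : 0 < `|beta_last alpha W| by rewrite normr_gt0 beta_last_neq0.
have := le_lt_trans (Gm_ge_xi (intmx R v)) small.
rewrite -/(xi alpha v) mulrAC ltr_pdivrMr // ltr_pM2l ?ltr0n //.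
by rewrite ltNge beta_le.
Qed.

End MinkowskiLastStep.

Theorem lemma5p2 (R : realFieldType) (n : nat) (alpha : 'I_n -> R)
    (halpha : Qlin_indep alpha) (m : nat) (hm : (0 < m)%N)
    (W : 'M[int]_n.+1) (hW : is_Minkowski_matrix m alpha W)
    (mu : R) (hmu : is_succ_min (Gm m alpha W) n.+1 mu) :
  m%:R <= mu.
Proof.
case: hmu => _ greatest; apply: greatest => s [_ [V [freeV boundV]]].
have fullV : row_full (ratmx V).
  by rewrite row_full_unit -row_free_unit /row_free -(mxrank_map (@ratr R)) -intmx_ratr.
have [k outside] := row_outside_nonfull_space fullV (prevmx_last_not_full (ratmx W)).
apply: le_trans (boundV k); rewrite /intmx -map_row.
by apply: Gm_ge_m_outside_prev => //; rewrite /ratmx map_row.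
Qed.
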